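(* Let $\mathcal{A}$ be a pOC with state set $Q$ whose underlying chain $\mathcal{X}$, with transition matrix $A$, is strongly connected. Let $\alpha$ be the invariant distribution of $\mathcal{X}$, $s$ the vector of expected counter changes, and $t=\alpha s$ the trend. Then: (a) With $W:=\mathbf{1}\alpha$, i.e., the matrix each of whose rows equals $\alpha$, the matrix $Z:=(I-A+W)^{-1}$ exists and $Zs$ is a potential. (b) There exists a potential $v$ with $v_{\max}-v_{\min}\le 2|Q|/x_{\min}^{|Q|}$, where $x_{\min}$ is the smallest nonzero entry of $A$.
   Context: A pOC has finite state set $Q$ and positive rules $\delta^{>0}\subseteq Q\times\{-1,0,1\}\times Q$ with probabilities $P^{>0}$, which form a positive probability distribution over the outgoing positive rules of each state. $\mathcal{X}$ is the finite Markov chain on $Q$ with transition matrix $A_{pq}=\sum_cP^{>0}(p,c,q)$. $s_p=\sum_{(p,c,q)\in\delta^{>0}}P^{>0}(p,c,q)\cdot c$. A potential is any vector $v\in\mathbb{R}^Q$ satisfying $s+Av=v+\mathbf{1}t$, where $\mathbf{1}$ is the all-ones vector. $v_{\max}$ and $v_{\min}$ denote the largest and smallest components of $v$. *)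

From HB Require Import structures.
From mathcomp Require Import all_boot all_order all_algebra.
From mathcomp Require Import reals.
Set Implicit Arguments. Unset Strict Implicit. Unset Printing Implicit Defensive.
Import Order.TTheory GRing.Theory Num.Theory.
Local Open Scope ring_scope.

(* States are 'I_n (so |Q| = n); counter changes {-1,0,1} are encoded by
   c : 'I_3 with value c - 1. *)
Definition cval {R : pzRingType} (c : 'I_3) : R := (c%:R - 1).

(* A pOC restricted to its positive rules delta^{>0} with probabilities P^{>0}. *)
Record pOC (R : realType) (n : nat) := {
  delta : {set 'I_n * 'I_3 * 'I_n};
  prob : 'I_n -> 'I_3 -> 'I_n -> R;
  prob_pos : forall p c q, (p, c, q) \in delta -> 0 < prob p c q;
  prob_sum : forall p : 'I_n,
      \sum_(r in delta | r.1.1 == p) prob r.1.1 r.1.2 r.2 = 1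
}.

Definition chainA (R : realType) n (M : pOC R n) : 'M[R]_n :=
  \matrix_(p, q) \sum_(c < 3 | (p, c, q) \in delta M) prob M p c q.

Definition svec (R : realType) n (M : pOC R n) : 'cV[R]_n :=
  \col_p \sum_(r in delta M | r.1.1 == p) prob M r.1.1 r.1.2 r.2 * cval r.1.2.

Definition strongly_connected (R : realType) n (A : 'M[R]_n) : Prop :=
  forall p q : 'I_n, connect [rel i j | 0 < A i j] p q.

Definition invariant_distribution (R : realType) n (A : 'M[R]_n) (alpha : 'rV[R]_n) : Prop :=
  alpha *m A = alpha /\ (forall i, 0 <= alpha 0 i) /\ \sum_i alpha 0 i = 1.

Definition potential (R : realType) n (A : 'M[R]_n) (s : 'cV[R]_n) (t : R) (v : 'cV[R]_n) : Prop :=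
  s + A *m v = v + const_mx t.

(* smallest nonzero entry of A (entries of a stochastic matrix are <= 1) *)
Definition xmin (R : realType) n (A : 'M[R]_n) : R :=
  \big[Num.min/1]_(ij : 'I_n * 'I_n | A ij.1 ij.2 != 0) A ij.1 ij.2.

From HB Require Import structures.
From mathcomp Require Import all_boot all_order all_algebra.
From mathcomp Require Import reals.
From mathcomp Require Import lra.
Import Order.TTheory GRing.Theory Num.Theory.
Local Open Scope ring_scope.

(* If [A g <= g + c] for a nonnegative [g], then along an edge [x -> y] of the
   chain [xmin A * g y <= A x y * g y <= g x + c]; following a shortest path
   (at most [n - 1] edges) from a zero of [g] gives [g <= c n / xmin A ^ n].
   For a potential [v], [g = max v - v] satisfies this with [c = max (s - t)],
   which bounds the oscillation of [v]; with [s = t = 0] it shows that harmonic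
   vectors are constant. Hence [alpha x = 0] and [A x = x] for [x] in the kernel
   of [I - A + W] force [x = 0], so [Z] exists, and since [alpha Z = alpha] we
   get [W Z s = 1 t], which is what turns [(I - A + W) Z s = s] into the
   potential equation. *)

Section StochasticMatrix.
Context {R : realType} {n : nat} {A : 'M[R]_n}.
Hypothesis A_ge0 : forall i j, 0 <= A i j.
Hypothesis A_row_sum : forall i, \sum_j A i j = 1.

Lemma xmin_gt0 : 0 < xmin A.
Proof.
rewrite /xmin; elim/big_rec: _ => [|ij x Aij_neq0 x_gt0]; first exact: ltr01.
by rewrite lt_min x_gt0 andbT lt_def Aij_neq0 A_ge0.
Qed.

Lemma xmin_le_entry i j : 0 < A i j -> xmin A <= A i j.
Proof.
move=> Aij_gt0; rewrite /xmin.
exact: (@bigmin_le_cond _ _ _ _ (i, j) (fun ij => A ij.1 ij.2 != 0) (fun ij => A ij.1 ij.2))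
  (lt0r_neq0 Aij_gt0).
Qed.

Lemma xmin_le1 : xmin A <= 1.
Proof. exact: bigmin_le_id. Qed.

Section SubharmonicGap.
Context {g : 'I_n -> R} {c : R}.
Hypothesis g_ge0 : forall i, 0 <= g i.
Hypothesis c_ge0 : 0 <= c.
Hypothesis g_subharmonic : forall i, \sum_j A i j * g j <= g i + c.

Lemma subharmonic_edge x y : 0 < A x y -> xmin A * g y <= g x + c.
Proof.
move=> Axy_gt0; apply: le_trans (g_subharmonic x).
apply: le_trans (_ : A x y * g y <= _); first by rewrite ler_wpM2r ?xmin_le_entry.
rewrite (bigD1 y) //= lerDl; apply: sumr_ge0 => j _; exact: mulr_ge0.
Qed.

Lemma subharmonic_path {x p} : g x = 0 -> path [rel i j | 0 < A i j] x p ->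
  xmin A ^+ size p * g (last x p) <= c * (size p)%:R.
Proof.
move=> gx0; elim/last_ind: p => [|p z IHp]; first by rewrite /= gx0 mulr0 mulr0n mulr0.
rewrite rcons_path last_rcons size_rcons => /andP[/IHp IH /subharmonic_edge edge].
have xmin_pow_ge0 : 0 <= xmin A ^+ size p := exprn_ge0 _ (ltW xmin_gt0).
have xmin_pow_le1 : xmin A ^+ size p <= 1 := exprn_ile1 _ (ltW xmin_gt0) xmin_le1.
rewrite exprSr -mulrA; apply: le_trans (ler_wpM2l xmin_pow_ge0 edge) _.
rewrite mulrDr -natr1 mulrDr mulr1 lerD // -[leRHS]mul1r.
exact: ler_wpM2r.
Qed.

Lemma subharmonic_connect {x y} : g x = 0 -> connect [rel i j | 0 < A i j] x y ->
  g y <= c * n%:R / xmin A ^+ n.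
Proof.
move=> gx0 /connectP[p xp ->{y}]; case: (shortenP xp) => q xq uniq_xq _.
have size_q : (size q < n)%N.
  by have := max_card (mem (x :: q)); rewrite card_ord (card_uniqP uniq_xq).
have xmin_pow_gt0 : 0 < xmin A ^+ n by rewrite exprn_gt0 ?xmin_gt0.
rewrite ler_pdivlMr // mulrC.
have pow_le : xmin A ^+ n * g (last x q) <= xmin A ^+ size q * g (last x q).
  by rewrite ler_wpM2r // (ler_wiXn2l (ltW xmin_gt0) xmin_le1) // ltnW.
apply: le_trans pow_le (le_trans (subharmonic_path gx0 xq) _).
by rewrite ler_wpM2l // ler_nat ltnW.
Qed.

End SubharmonicGap.

Hypothesis A_connected : strongly_connected A.

Lemma potential_oscillation {s t v c} : potential A s t v ->
  0 <= c -> (forall k, s k 0 - t <= c) ->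
  forall p q, v p 0 - v q 0 <= c * n%:R / xmin A ^+ n.
Proof.
move=> v_pot c_ge0 s_le p q.
have [i0 _ v_le] := @arg_maxP _ R _ p xpredT (fun k => v k 0) isT.
pose g k := v i0 0 - v k 0.
have g_ge0 k : 0 <= g k by rewrite subr_ge0; exact: v_le.
have g_subharmonic k : \sum_j A k j * g j <= g k + c.
  rewrite /g; under eq_bigr do rewrite mulrBr.
  rewrite sumrB -mulr_suml A_row_sum mul1r.
  move/matrixP: v_pot => /(_ k 0); rewrite !mxE => /(canRL (addKr _)) ->.
  by have := s_le k; lra.
apply: le_trans _ (subharmonic_connect g_ge0 c_ge0 g_subharmonic (subrr _) (A_connected i0 q)).
by rewrite /g lerD2r; exact: v_le.
Qed.

Lemma harmonic_const (x : 'cV[R]_n) : A *m x = x -> forall i j, x i 0 = x j 0.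
Proof.
move=> Ax i j.
have x_pot : potential A 0 0 x.
  by rewrite /potential add0r Ax; apply/matrixP => k l; rewrite !mxE addr0.
have osc p q : x p 0 - x q 0 <= 0.
  have := potential_oscillation x_pot (lexx 0) _ p q; rewrite !mul0r.
  by apply=> k; rewrite mxE subrr.
by apply/eqP; rewrite eq_le -subr_le0 osc -subr_le0 osc.
Qed.

Section FundamentalMatrix.
Context {alpha : 'rV[R]_n}.
Hypothesis alpha_inv : invariant_distribution A alpha.
Local Notation W := (const_mx 1 *m alpha).

Lemma invariant_mul_fundamental : alpha *m (1%:M - A + W) = alpha.
Proof.
have [alphaA [_ alpha_sum]] := alpha_inv.
have alpha_one : alpha *m const_mx 1 = 1%:M.
  apply/matrixP => i j; rewrite !ord1 !mxE.
  by under eq_bigr do rewrite mxE mulr1.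
by rewrite !mulmxDr mulmxN mulmx1 alphaA subrr add0r mulmxA alpha_one mul1mx.
Qed.

Lemma fundamental_mulmx_eq0 (x : 'cV[R]_n) : (1%:M - A + W) *m x = 0 -> x = 0.
Proof.
have [_ [_ alpha_sum]] := alpha_inv.
move=> Bx0; have alpha_x : alpha *m x = 0.
  by rewrite -invariant_mul_fundamental -mulmxA Bx0 mulmx0.
have Ax : A *m x = x.
  move/eqP: Bx0; rewrite !mulmxDl mulNmx mul1mx -mulmxA alpha_x mulmx0 addr0.
  by rewrite subr_eq0 => /eqP <-.
apply/matrixP => i j; rewrite ord1 [RHS]mxE.
move/matrixP: alpha_x => /(_ 0 0); rewrite !mxE => <-.
rewrite -[LHS]mul1r -alpha_sum mulr_suml; apply: eq_bigr => k _.
by rewrite (harmonic_const x Ax k i).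
Qed.

Lemma fundamental_unitmx : (1%:M - A + W) \in unitmx.
Proof.
rewrite -unitmx_tr -row_free_unit; apply: inj_row_free => u uB0.
apply: trmx_inj; rewrite trmx0; apply: fundamental_mulmx_eq0.
by rewrite -(trmxK (_ *m _)) trmx_mul trmxK uB0 trmx0.
Qed.

Lemma fundamental_potential s :
  potential A s ((alpha *m s) 0 0) (invmx (1%:M - A + W) *m s).
Proof.
set v := invmx _ *m s.
have alpha_v : alpha *m v = alpha *m s.
  by rewrite /v mulmxA -{1}invariant_mul_fundamental mulmxK ?fundamental_unitmx.
have Wv : W *m v = const_mx ((alpha *m s) 0 0) :> 'cV[R]_n.
  by apply/matrixP => i j; rewrite ord1 -mulmxA alpha_v !mxE big_ord1 !mxE mul1r.
have Bv : (1%:M - A + W) *m v = s by rewrite /v mulKVmx ?fundamental_unitmx.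
by rewrite /potential -Wv -{1}Bv !mulmxDl mulNmx mul1mx addrAC subrK.
Qed.

End FundamentalMatrix.

End StochasticMatrix.

Section OneCounter.
Context {R : realType} {n : nat} (M : pOC R n).

Lemma chainA_ge0 i j : 0 <= chainA M i j.
Proof. rewrite mxE; apply: sumr_ge0 => c rule_in; exact: ltW (prob_pos rule_in). Qed.

Lemma chainA_row_sum i : \sum_j chainA M i j = 1.
Proof.
rewrite -(prob_sum M i).
transitivity (\sum_a \sum_(c < 3) \sum_q
    if ((a, c, q) \in delta M) && (a == i) then prob M a c q else 0); last first.
  rewrite pair_big pair_big [RHS]big_mkcond /=.
  by apply: eq_bigr => [[[a c] q]] _.
rewrite [RHS](bigD1 i) //= [X in _ + X]big1 ?addr0; last first.
  move=> a /negbTE a_neq_i; apply: big1 => c _; apply: big1 => q _.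
  by rewrite a_neq_i andbF.
rewrite exchange_big; apply: eq_bigr => q _.
by rewrite mxE big_mkcond; apply: eq_bigr => c _; rewrite eqxx andbT.
Qed.

Lemma cval_norm_le1 (c : 'I_3) : `|cval c : R| <= 1.
Proof.
by rewrite /cval; case: c => [[|[|[|]]] //= _]; rewrite ?sub0r ?subrr ?addrK normrE.
Qed.

Lemma svec_norm_le1 i : `|svec M i 0| <= 1.
Proof.
rewrite mxE -(prob_sum M i); apply: le_trans (ler_norm_sum _ _ _) _.
apply: ler_sum => [[[a c] q]] /andP[rule_in _] /=.
have prob_gt0 := prob_pos rule_in.
by rewrite normrM gtr0_norm // ler_piMr ?cval_norm_le1 // ltW.
Qed.

End OneCounter.

Lemma distribution_mul_norm_le1 {R : numDomainType} {n} (alpha : 'rV[R]_n) (s : 'cV[R]_n) :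
  (forall i, 0 <= alpha 0 i) -> \sum_i alpha 0 i = 1 ->
  (forall i, `|s i 0| <= 1) -> `|(alpha *m s) 0 0| <= 1.
Proof.
move=> alpha_ge0 alpha_sum s_le1; rewrite mxE -alpha_sum.
apply: le_trans (ler_norm_sum _ _ _) _; apply: ler_sum => i _.
by rewrite normrM ger0_norm // ler_piMr.
Qed.

Theorem mainTheorem9 (R : realType) (n : nat) (M : pOC R n) (alpha : 'rV[R]_n) :
  strongly_connected (chainA M) ->
  invariant_distribution (chainA M) alpha ->
  let A := chainA M in
  let s := svec M in
  let t := (alpha *m s) 0 0 in
  let W := const_mx 1 *m alpha : 'M[R]_n in
  ((1%:M - A + W) \in unitmx /\ potential A s t (invmx (1%:M - A + W) *m s)) /\
  (exists v : 'cV[R]_n, potential A s t v /\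
     forall p q : 'I_n, v p 0 - v q 0 <= 2 * n%:R / (xmin A) ^+ n).
Proof.
move=> A_connected alpha_inv A s t W.
have A_ge0 := chainA_ge0 M; have A_row_sum := chainA_row_sum M.
have Z_unit := fundamental_unitmx A_ge0 A_row_sum A_connected alpha_inv.
have Zs_pot := fundamental_potential A_ge0 A_row_sum A_connected alpha_inv s.
split=> //; exists (invmx (1%:M - A + W) *m s); split=> //.
have [_ [alpha_ge0 alpha_sum]] := alpha_inv.
have t_le1 := distribution_mul_norm_le1 alpha s alpha_ge0 alpha_sum (svec_norm_le1 M).
apply: (potential_oscillation A_ge0 A_row_sum A_connected Zs_pot (ler0n _ 2)) => k.
move: t_le1 (svec_norm_le1 M k); rewrite -/s -/t !ler_norml => /andP[? ?] /andP[? ?]; lra.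
Qed.
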